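(* Let $n=2N$ or $n=2N+1$ and let $V=\mathbb{C}^n$ with basis $e_{\pm1},\dots,e_{\pm N}$ (together with an extra basis vector $e_0$ when $n=2N+1$), equipped with the nondegenerate symmetric bilinear form $B$ given by $B(e_\alpha,e_{-\alpha})=1$ for $\alpha=1,\dots,N$, $B(e_0,e_0)=1$ (when $n$ is odd), and all other pairings of basis vectors equal to $0$. Let $O(n)$ be the orthogonal group of $B$, let $\mathfrak h$ be the Cartan subalgebra of $\mathfrak{so}(n)$ consisting of the operators acting by $x_\alpha$ on $e_\alpha$, by $-x_\alpha$ on $e_{-\alpha}$ ($\alpha=1,\dots,N$) and by $0$ on $e_0$, and let $\mathrm N_{O(n)}(\mathfrak h)=\{g\in O(n): g\mathfrak h g^{-1}=\mathfrak h\}$. For a subset $\{a_1,\dots,a_l\}\subseteq\{1,\dots,N\}$ of $l$ distinct indices (read cyclically, $a_{l+1}=a_1$) and $\lambda\in\mathbb C^\times$, define: - $[l,\lambda]_+$ to be the operator with $e_{-a_i}\mapsto e^{i\pi(l-1)/l}\lambda\, e_{-a_{i+1}}$ and $e_{a_i}\mapsto e^{-i\pi(l-1)/l}\lambda^{-1}\, e_{a_{i+1}}$ for $i=1,\dots,l$, and identity on all other basis vectors; - $[l]_-$ to be the operator with $e_{a_1}\mapsto e_{a_2}\mapsto\dots\mapsto e_{a_l}\mapsto e_{-a_1}\mapsto e_{-a_2}\mapsto\dots\mapsto e_{-a_l}\mapsto e_{a_1}$, and identity on all other basis vectors; - for $n$ odd and $\epsilon\in\{\pm1\}$, $[\epsilon]$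 to be the operator $e_0\mapsto\epsilon e_0$, identity on all other basis vectors. Then every $g\in \mathrm N_{O(2N)}(\mathfrak h)$ is conjugate in $\mathrm N_{O(2N)}(\mathfrak h)$ to a product $\prod_{j=1}^K[l_j,\lambda_j]_+\cdot\prod_{j=1}^{K'}[l'_j]_-$ of such operators supported on pairwise disjoint index sets which together partition $\{1,\dots,N\}$ (so $\sum_j l_j+\sum_j l'_j=N$), for some $K,K'\ge0$, lengths $l_j,l'_j\ge1$ and $\lambda_j\in\mathbb C^\times$; and every $g\in \mathrm N_{O(2N+1)}(\mathfrak h)$ is conjugate in $\mathrm N_{O(2N+1)}(\mathfrak h)$ to a product $[\epsilon]\cdot\prod_{j=1}^K[l_j,\lambda_j]_+\cdot\prod_{j=1}^{K'}[l'_j]_-$ of the same form with some $\epsilon\in\{\pm1\}$.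
   Context: $\mathrm N_{O(2N)}(\mathfrak h)\cong S_N\ltimes(\mathbb Z/2\mathbb Z)^N\ltimes(\mathbb C^\times)^N$, where $S_N$ permutes the indices simultaneously on $e_\alpha$ and $e_{-\alpha}$, the $\alpha$-th factor $\mathbb Z/2\mathbb Z$ swaps $e_\alpha\leftrightarrow e_{-\alpha}$, and $(\lambda_\alpha)\in(\mathbb C^\times)^N$ acts by $e_\alpha\mapsto\lambda_\alpha e_\alpha$, $e_{-\alpha}\mapsto\lambda_\alpha^{-1}e_{-\alpha}$; and $\mathrm N_{O(2N+1)}(\mathfrak h)=\mathrm N_{O(2N)}(\mathfrak h)\times\mathbb Z/2\mathbb Z$, the last factor acting by $e_0\mapsto -e_0$. *)

From HB Require Import structures.
From mathcomp Require Import all_boot all_order all_algebra.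
From mathcomp Require Import complex zify.
From mathcomp Require Import reals trigo.
Set Implicit Arguments. Unset Strict Implicit. Unset Printing Implicit Defensive.
Import Order.TTheory GRing.Theory Num.Theory.
Local Open Scope ring_scope.

(* Basis of V = C^n, n = 2N + k (k = false : n = 2N, k = true : n = 2N+1).
   Index conventions (0-based, alpha in 'I_N stands for the paper's alpha+1):
     e_{alpha}   is index alpha,
     e_{-alpha}  is index N + alpha,
     e_0         is index 2N (only when k = true). *)
Definition dimV (N : nat) (k : bool) : nat := (N + N + k)%N.

Lemma ep_proof N k (a : 'I_N) : (a < dimV N k)%N.
Proof. rewrite /dimV; have := ltn_ord a; lia. Qed.
Lemma em_proof N k (a : 'I_N) : (N + a < dimV N k)%N.
Proof. rewrite /dimV; have := ltn_ord a; lia. Qed.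

Definition ep N k (a : 'I_N) : 'I_(dimV N k) := Ordinal (ep_proof k a).
Definition em N k (a : 'I_N) : 'I_(dimV N k) := Ordinal (em_proof k a).

Section Ops.
Variable C : fieldType.
Variables (N : nat) (k : bool).
Local Notation n := (dimV N k).

Definition Bmx : 'M[C]_n :=
  \sum_(a < N) (delta_mx (ep k a) (em k a) + delta_mx (em k a) (ep k a))
  + \sum_(j : 'I_n | (N + N <= j)%N) delta_mx j j.

Definition orthogonal (g : 'M[C]_n) : Prop := g^T *m Bmx *m g = Bmx.

Definition cartan (x : 'I_N -> C) : 'M[C]_n :=
  \sum_(a < N) (x a *: delta_mx (ep k a) (ep k a) - x a *: delta_mx (em k a) (em k a)).

Definition in_normalizer (g : 'M[C]_n) : Prop :=
  orthogonal g /\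
  (forall x, exists y, g *m cartan x *m invmx g = cartan y) /\
  (forall y, exists x, g *m cartan x *m invmx g = cartan y).

(* the cyclic shift e_{s_1} -> c e_{s_2} -> ... -> c e_{s_m} -> c e_{s_1} *)
Definition cyc_part (s : seq 'I_n) (c : C) : 'M[C]_n :=
  \sum_(p <- zip s (rot 1 s)) c *: delta_mx p.2 p.1.

Definition id_off (s : seq 'I_n) : 'M[C]_n :=
  \sum_(j : 'I_n | j \notin s) delta_mx j j.

(* [l, lambda]_+ on the cyclically ordered indices a = [a_1; ...; a_l],
   with z = e^{i pi (l-1)/l} supplied as a parameter:
   e_{-a_i} -> z lambda e_{-a_{i+1}},  e_{a_i} -> z^{-1} lambda^{-1} e_{a_{i+1}} *)
Definition plus_op (z : C) (a : seq 'I_N) (lam : C) : 'M[C]_n :=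
  cyc_part [seq em k x | x <- a] (z * lam)
  + cyc_part [seq ep k x | x <- a] (z^-1 * lam^-1)
  + id_off ([seq ep k x | x <- a] ++ [seq em k x | x <- a]).

Definition minus_op (a : seq 'I_N) : 'M[C]_n :=
  cyc_part ([seq ep k x | x <- a] ++ [seq em k x | x <- a]) 1
  + id_off ([seq ep k x | x <- a] ++ [seq em k x | x <- a]).

Definition eps_op (eps : C) : 'M[C]_n :=
  \sum_(j : 'I_n | (j < N + N)%N) delta_mx j j
  + \sum_(j : 'I_n | (N + N <= j)%N) eps *: delta_mx j j.

End Ops.

Definition zeta (R : realType) (l : nat) : R[i] :=
  (cos (pi * (l%:R - 1) / l%:R) +i* sin (pi * (l%:R - 1) / l%:R))%C.

Definition normal_form (R : realType) (N : nat) (k : bool)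
  (ps : seq (seq 'I_N * R[i])) (ms : seq (seq 'I_N)) : 'M[R[i]]_(dimV N k) :=
  (\prod_(p <- ps) @plus_op _ N k (zeta R (size p.1)) p.1 p.2)
  * (\prod_(a <- ms) @minus_op _ N k a).

Definition admissible (R : realType) (N : nat)
  (ps : seq (seq 'I_N * R[i])) (ms : seq (seq 'I_N)) : Prop :=
  all (fun p => 0 < size p.1)%N ps /\ all (fun a => 0 < size a)%N ms /\
  all (fun p => p.2 != 0) ps /\
  perm_eq (flatten ([seq p.1 | p <- ps] ++ ms)) (enum 'I_N).

From Pilot Require Import Defs.
From HB Require Import structures.
From mathcomp Require Import all_boot all_order all_fingroup all_algebra.
From mathcomp Require Import complex zify ring.
From mathcomp Require Import reals trigo.
Set Implicit Arguments. Unset Strict Implicit. Unset Printing Implicit Defensive.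
Import Order.TTheory GRing.Theory Num.Theory.
Local Open Scope ring_scope.

(* Let g normalize h.  Conjugation by g permutes the eigenlines C e_j of a
   regular element of h, so g is monomial, e_j |-> c_j e_(s j), and since g
   preserves B, s is a signed permutation (it commutes with e_a <-> e_(-a)) and
   c_j c_(-j) = 1.  Conversely all such monomial matrices normalize h, so we may
   conjugate g by them.  Let (r, p r, ..., p^(l-1) r) be a cycle of the
   permutation p of {1..N} underlying s: g^l maps e_r to a multiple of e_r
   (a positive cycle) or of e_(-r) (a negative cycle).
   Renaming e_(p^i r) into the appropriate +-g^i(e_r) turns s into the signed
   permutation of [l, lambda]_+ or of [l]_-, and rescaling these basis vectors
   makes all the coefficients of the cycle equal, to an l-th root of their
   product in the first case and to 1 in the second. *)

Section Indices.
Variables (N : nat) (k : bool).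
Local Notation n := (dimV N k).

Definition idx (b : bool) (a : 'I_N) : 'I_n := if b then em k a else ep k a.

Lemma idx_e0 b a : (N + N <= idx b a)%N = false.
Proof. by apply/negbTE; rewrite -ltnNge; case: b => /=; have := ltn_ord a; lia. Qed.

Lemma idx_eq b a b' a' : (idx b a == idx b' a') = (b == b') && (a == a').
Proof.
rewrite -!val_eqE; have := ltn_ord a; have := ltn_ord a'.
case: b; case: b' => /= ha' ha; rewrite ?eqn_add2l //; apply/negbTE; lia.
Qed.

Lemma idx_ep b a a' : (idx b a == ep k a') = ~~ b && (a == a').
Proof. by rewrite -[ep k a']/(idx false a') idx_eq; case: b. Qed.

Lemma idx_em b a a' : (idx b a == em k a') = b && (a == a').
Proof. by rewrite -[em k a']/(idx true a') idx_eq; case: b. Qed.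

Lemma e0_idx (j : 'I_n) b a : (N + N <= j)%N -> (j == idx b a) = false.
Proof. by move=> hj; apply: contraTF hj => /eqP ->; rewrite idx_e0. Qed.

Lemma idx_inj b a b' a' : idx b a = idx b' a' -> b = b' /\ a = a'.
Proof. by move/eqP; rewrite idx_eq => /andP[/eqP -> /eqP ->]. Qed.

Lemma idx_injr b : injective (idx b).
Proof. by move=> a a' /idx_inj []. Qed.

Lemma e0_unique (i j : 'I_n) : (N + N <= i)%N -> (N + N <= j)%N -> i = j.
Proof.
move=> hi hj; apply: ord_inj; move: hi hj (ltn_ord i) (ltn_ord j).
have : (k <= 1)%N by case: k.
rewrite /dimV; lia.
Qed.

Variant idx_spec : 'I_n -> Type :=
| IdxPM b a : idx_spec (idx b a)
| IdxE0 (j : 'I_n) of (N + N <= j)%N : idx_spec j.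

Lemma idxP j : idx_spec j.
Proof.
case: (ltnP j N) => [jN|Nj].
  have -> : j = idx false (Ordinal jN) by apply: val_inj.
  exact: IdxPM.
case: (ltnP j (N + N)) => [jNN|]; last exact: IdxE0.
have jN' : (j - N < N)%N by lia.
have -> : j = idx true (Ordinal jN') by apply: val_inj => /=; lia.
exact: IdxPM.
Qed.

Definition idx_case (X : Type) (F : bool -> 'I_N -> X) (F0 : 'I_n -> X) (j : 'I_n) : X :=
  if insub (val j) is Some a then F false a
  else if insub (val j - N)%N is Some a then F true a else F0 j.

Lemma idx_caseE X F F0 b a : @idx_case X F F0 (idx b a) = F b a.
Proof.
rewrite /idx_case; case: b => /=; last by rewrite insubT //= => ?; congr F; apply: val_inj.
rewrite insubF /=; last by rewrite ltnNge leq_addr.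
by rewrite insubT /= ?addKn // => ?; congr F; apply: val_inj.
Qed.

Lemma idx_case0 X F F0 (j : 'I_n) : (N + N <= j)%N -> @idx_case X F F0 j = F0 j.
Proof. move=> hj; rewrite /idx_case /= !insubF //; apply/negbTE; rewrite -leqNgt; lia. Qed.

Definition opp_idx : 'I_n -> 'I_n := idx_case (fun b a => idx (~~ b) a) id.

Lemma opp_idxE b a : opp_idx (idx b a) = idx (~~ b) a.
Proof. exact: idx_caseE. Qed.

Lemma opp_idx0 (j : 'I_n) : (N + N <= j)%N -> opp_idx j = j.
Proof. exact: idx_case0. Qed.

Lemma opp_idxK : involutive opp_idx.
Proof. by move=> j; case: (idxP j) => [b a|j' hj]; rewrite ?opp_idxE ?negbK ?opp_idx0. Qed.

Definition opp_commute (s : 'I_n -> 'I_n) := forall j, s (opp_idx j) = opp_idx (s j).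

Lemma opp_commute_inv (s : {perm 'I_n}) : opp_commute s -> opp_commute (s^-1)%g.
Proof. by move=> hs j; apply: (@perm_inj _ s); rewrite hs !permKV. Qed.

Definition sgperm_fun (p : 'I_N -> 'I_N) (f : 'I_N -> bool) : 'I_n -> 'I_n :=
  idx_case (fun b a => idx (b (+) f a) (p a)) id.

Lemma sgperm_fun_inj (p : {perm 'I_N}) f : injective (sgperm_fun p f).
Proof.
move=> i j; case: (idxP i) => [b a|i' hi]; case: (idxP j) => [b' a'|j' hj];
  rewrite /sgperm_fun ?idx_caseE ?idx_case0 //.
- by case/idx_inj => hb /perm_inj ea; subst a'; rewrite (addIb hb).
- by move=> e; move: hj; rewrite -e idx_e0.
- by move=> e; move: hi; rewrite e idx_e0.
Qed.

Definition sgperm (p : {perm 'I_N}) f : {perm 'I_n} := perm (@sgperm_fun_inj p f).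

Lemma sgpermE p f b a : sgperm p f (idx b a) = idx (b (+) f a) (p a).
Proof. by rewrite permE /sgperm_fun idx_caseE. Qed.

Lemma sgperm0 p f (j : 'I_n) : (N + N <= j)%N -> sgperm p f j = j.
Proof. by move=> hj; rewrite permE /sgperm_fun idx_case0. Qed.

Lemma sgperm_opp p f : opp_commute (sgperm p f).
Proof.
move=> j; case: (idxP j) => [b a|j' hj]; last by rewrite !(opp_idx0, sgperm0).
by rewrite opp_idxE !sgpermE opp_idxE addNb.
Qed.

Lemma opp_idx_neq b a : opp_idx (idx b a) != idx b a.
Proof. by rewrite opp_idxE idx_eq eqxx andbT; case: b. Qed.

Lemma opp_commute_e0 (s : 'I_n -> 'I_n) (j : 'I_n) :
  opp_commute s -> (N + N <= j)%N -> (N + N <= s j)%N.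
Proof.
move=> hs hj; move: (hs j); rewrite opp_idx0 //.
by case: (idxP (s j)) => [b a /eqP|//]; rewrite eq_sym (negbTE (opp_idx_neq _ _)).
Qed.

Lemma opp_commute_sgperm (s : {perm 'I_n}) :
  opp_commute s -> exists p f, s = sgperm p f.
Proof.
move=> hs.
pose pa a := idx_case (fun _ a' => a') (fun _ => a) (s (idx false a)).
pose fa a := idx_case (fun b _ => b) (fun _ => false) (s (idx false a)).
have hsa a : s (idx false a) = idx (fa a) (pa a).
  rewrite /fa /pa; move E : (s (idx false a)) => j.
  case: (idxP j) E => [b a' _|j' hj e]; first by rewrite !idx_caseE.
  have : s (opp_idx (idx false a)) = s (idx false a) by rewrite hs e opp_idx0.
  by move/perm_inj/eqP; rewrite (negbTE (opp_idx_neq _ _)).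
have pa_inj : injective pa.
  move=> a a' e; case: (eqVneq (fa a) (fa a')) => [ef|nf].
    have : s (idx false a) = s (idx false a') by rewrite !hsa e ef.
    by move/perm_inj/idx_inj => [].
  have : s (idx false a) = s (opp_idx (idx false a')).
    by rewrite hs !hsa opp_idxE e; case: (fa a) (fa a') nf => [] [].
  by move/perm_inj; rewrite opp_idxE => /idx_inj [].
exists (perm pa_inj), fa; apply/permP => j; case: (idxP j) => [b a|j' hj].
  rewrite sgpermE permE; case: b; last by rewrite hsa.
  by rewrite -[idx true a]/(idx (~~ false) a) -opp_idxE hs hsa opp_idxE.
by rewrite sgperm0 //; apply: e0_unique => //; apply: opp_commute_e0.
Qed.

End Indices.

Section Monomial.
Variables (C : fieldType) (n : nat).
Implicit Types (s t : 'I_n -> 'I_n) (c d : 'I_n -> C).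

Definition monomx s c : 'M[C]_n := \matrix_(i, j) (if i == s j then c j else 0).

Lemma monomxE s c i j : monomx s c i j = if i == s j then c j else 0.
Proof. exact: mxE. Qed.

Lemma eq_monomx s t c d : s =1 t -> c =1 d -> monomx s c = monomx t d.
Proof. by move=> est ecd; apply/matrixP => i j; rewrite !monomxE est ecd. Qed.

Lemma monomx_coef_inj s c d : monomx s c = monomx s d -> c =1 d.
Proof. by move=> /matrixP e j; have := e (s j) j; rewrite !monomxE eqxx. Qed.

Lemma mul_monomx s c t d :
  monomx s c *m monomx t d = monomx (s \o t) (fun j => c (t j) * d j).
Proof.
apply/matrixP => i j; rewrite !mxE (bigD1 (t j)) //= big1 => [|m /negbTE hm].
  by rewrite !monomxE eqxx addr0; case: eqP; rewrite ?mul0r.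
by rewrite !monomxE hm mulr0.
Qed.

Lemma monomx1 : monomx id (fun=> 1) = 1%:M.
Proof. by apply/matrixP => i j; rewrite !mxE; case: eqP. Qed.

Lemma monomx_diag_mulmx c (A : 'M[C]_n) :
  monomx id c *m A = \matrix_(i, j) (c i * A i j).
Proof.
apply/matrixP => i j; rewrite !mxE (bigD1 i) //= big1 ?addr0 => [|m /negbTE hm].
  by rewrite monomxE eqxx.
by rewrite monomxE eq_sym hm mul0r.
Qed.

Lemma mulmx_monomx_diag (A : 'M[C]_n) c :
  A *m monomx id c = \matrix_(i, j) (A i j * c j).
Proof.
apply/matrixP => i j; rewrite !mxE (bigD1 j) //= big1 ?addr0 => [|m /negbTE hm].
  by rewrite monomxE eqxx.
by rewrite monomxE hm mulr0.
Qed.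

Lemma trmx_monomx (s : {perm 'I_n}) c :
  (monomx s c)^T = monomx (s^-1)%g (c \o (s^-1)%g).
Proof.
apply/matrixP => i j; rewrite !mxE /=.
have -> : (i == (s^-1)%g j) = (j == s i) by apply/eqP/eqP => [->|->]; rewrite ?permKV ?permK.
by case: eqP => [->|//]; rewrite permK.
Qed.

Lemma monomx_invmx (s : {perm 'I_n}) c : (forall j, c j != 0) ->
  invmx (monomx s c) = monomx (s^-1)%g (fun j => (c ((s^-1)%g j))^-1).
Proof.
move=> c_nz; have e1 : monomx (s^-1)%g (fun j => (c ((s^-1)%g j))^-1) *m monomx s c = 1%:M.
  by rewrite mul_monomx -monomx1; apply: eq_monomx => j /=; rewrite ?permK ?mulVf.
have [_ uM] := mulmx1_unit e1.
by rewrite -[LHS]mul1mx -e1 mulmxK.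
Qed.

Lemma monomx_unitmx (s : {perm 'I_n}) c : (forall j, c j != 0) -> monomx s c \in unitmx.
Proof.
move=> c_nz; have e1 : monomx s c *m monomx (s^-1)%g (fun j => (c ((s^-1)%g j))^-1) = 1%:M.
  by rewrite mul_monomx -monomx1; apply: eq_monomx => j /=; rewrite ?permKV ?mulfV.
by case: (mulmx1_unit e1).
Qed.

Lemma unitmx_row_neq0 (A : 'M[C]_n) i : A \in unitmx -> exists j, A i j != 0.
Proof.
move=> uA; case: (pickP (fun j => A i j != 0)) => [j hj|h]; first by exists j.
have := congr1 (fun M : 'M_n => M i i) (mulmxV uA).
rewrite !mxE eqxx big1 => [/eqP|j _]; first by rewrite eq_sym oner_eq0.
by move: (h j) => /negbFE/eqP ->; rewrite mul0r.
Qed.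

Lemma unitmx_col_neq0 (A : 'M[C]_n) j : A \in unitmx -> exists i, A i j != 0.
Proof.
rewrite -unitmx_tr => uAt; have [r] := unitmx_row_neq0 j uAt.
by rewrite mxE; exists r.
Qed.

Lemma intertwine_diag_monomx (g : 'M[C]_n) d d' :
  g \in unitmx -> injective d -> g *m monomx id d = monomx id d' *m g ->
  exists s : {perm 'I_n}, g = monomx s (fun j => g (s j) j) /\ forall j, d' (s j) = d j.
Proof.
move=> ug d_inj /matrixP eg.
have supp i j : g i j != 0 -> d' i = d j.
  move=> gij; have := eg i j; rewrite mulmx_monomx_diag monomx_diag_mulmx !mxE mulrC.
  by move/mulIf => ->.
have row_uniq i j j' : g i j != 0 -> g i j' != 0 -> j = j'.
  by move=> /supp e /supp e'; apply: d_inj; rewrite -e -e'.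
pose s0 j := odflt j [pick i | g i j != 0].
have hs0 j : g (s0 j) j != 0.
  rewrite /s0; case: pickP => [//|h].
  by have [r] := unitmx_col_neq0 j ug; rewrite h.
have s0_inj : injective s0 by move=> j j' e; apply: (row_uniq (s0 j)); rewrite // e.
pose s := perm s0_inj; have hs j : g (s j) j != 0 by rewrite permE.
have col_uniq i j : g i j != 0 -> i = s j.
  move=> gij; have := hs ((s^-1)%g i); rewrite permKV => h.
  by rewrite (row_uniq _ _ _ gij h) permKV.
exists s; split => [|j]; last exact: supp.
apply/matrixP => i j; rewrite monomxE; case: eqP => [->//|ne].
by case: (eqVneq (g i j) 0) => // /col_uniq /ne.
Qed.

Definition monomx_on (S : pred 'I_n) s c :=
  monomx (fun j => if S j then s j else j) (fun j => if S j then c j else 1).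

Lemma big_monomx_on (I : eqType) (L : seq I) (S : I -> pred 'I_n) s c :
  (forall x j, x \in L -> S x j -> S x (s j)) ->
  pairwise (fun x y => [disjoint S x & S y]) L ->
  \prod_(x <- L) monomx_on (S x) s c = monomx_on (fun j => has (S ^~ j) L) s c.
Proof.
elim: L => [|x L IH] stable dis.
  by rewrite big_nil (_ : 1 = 1%:M :> 'M[C]_n) // -monomx1 /monomx_on; apply: eq_monomx.
move: dis; rewrite pairwise_cons => /andP[/allP dis_x dis_L].
have stable_L y j : y \in L -> S y j -> S y (s j).
  by move=> yL; apply: stable; rewrite inE yL orbT.
rewrite big_cons IH //.
have out_x j : has (S ^~ j) L -> S x j = false /\ S x (s j) = false.
  case/hasP => y yL yj; split; first exact: disjointFl (dis_x y yL) yj.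
  exact: disjointFl (dis_x y yL) (stable_L _ _ yL yj).
change (monomx_on (S x) s c *m monomx_on (fun j => has (S ^~ j) L) s c =
        monomx_on (fun j => has (S ^~ j) (x :: L)) s c).
rewrite mul_monomx; apply: eq_monomx => j /=;
  case: (boolP (has _ L)) => [/out_x [-> ->]|_];
  by rewrite ?orbT ?orbF ?mul1r ?mulr1.
Qed.

End Monomial.

Section Normalizer.
Variables (C : numFieldType) (N : nat) (k : bool).
Local Notation n := (dimV N k).
Local Notation idx := (@idx N k).
Local Notation opp_idx := (@opp_idx N k).
Local Notation monomx := (@monomx C n).

Definition weight (x : 'I_N -> C) : 'I_n -> C :=
  idx_case (fun b a => if b then - x a else x a) (fun=> 0).

Lemma cartan_monomx x : cartan k x = monomx id (weight x).
Proof.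
apply/matrixP => i j; rewrite summxE monomxE /weight; case: (idxP j) => [b a|j' hj].
  rewrite idx_caseE (bigD1 a) //= big1 => [|a' /negbTE na]; rewrite !mxE ?idx_ep ?idx_em.
    rewrite eqxx addr0; case: b => /=; rewrite ?andbT ?andbF /idx;
      by case: (i == _); rewrite ?mulr0 ?mulr1 ?subr0 ?sub0r.
  by rewrite (eq_sym a) na !andbF /= !mulr0 subr0.
rewrite idx_case0 // if_same big1 // => a _.
by rewrite !mxE (e0_idx false a hj) (e0_idx true a hj) !andbF !mulr0 subr0.
Qed.

Lemma Bmx_monomx : Bmx C N k = monomx opp_idx (fun=> 1).
Proof.
apply/matrixP => i j; rewrite !mxE !summxE; case: (idxP j) => [b a|j' hj].
  rewrite opp_idxE [X in _ + X]big1 => [|j' hj']; last first.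
    by rewrite !mxE (eq_sym (idx b a)) (e0_idx _ _ hj') andbF.
  rewrite addr0 (bigD1 a) //= big1 => [|a' /negbTE na]; rewrite !mxE ?idx_ep ?idx_em.
    rewrite eqxx !andbT addr0; case: b; rewrite /= ?andbF ?andbT /idx;
      by case: (i == _); rewrite /= ?addr0 ?add0r.
  by rewrite (eq_sym a) na !andbF addr0.
rewrite opp_idx0 // [X in X + _]big1 ?add0r => [|a _]; last first.
  by rewrite !mxE (e0_idx false a hj) (e0_idx true a hj) !andbF addr0.
rewrite (bigD1 j') //= big1 ?addr0 => [|m /andP[_ /negbTE hm]]; rewrite !mxE.
  by rewrite eqxx andbT; case: (i == _).
by rewrite (eq_sym j') hm andbF.
Qed.

Lemma weight_opp x j : weight x (opp_idx j) = - weight x j.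
Proof.
rewrite /weight; case: (idxP j) => [b a|j' hj]; last by rewrite opp_idx0 // idx_case0 ?oppr0.
by rewrite opp_idxE !idx_caseE; case: b; rewrite ?opprK.
Qed.

Lemma weight_comp (s : 'I_n -> 'I_n) y :
  opp_commute s -> forall j, weight y (s j) = weight (fun a => weight y (s (ep k a))) j.
Proof.
move=> hs j; case: (idxP j) => [[] a|j' hj].
- by rewrite -[idx true a]/(idx (~~ false) a) -opp_idxE hs !weight_opp [in RHS]/weight idx_caseE.
- by rewrite {2}/weight idx_caseE.
- by rewrite /weight !idx_case0 // opp_commute_e0.
Qed.

Lemma orthogonal_monomxP (s : {perm 'I_n}) c : opp_commute s ->
  Defs.orthogonal (monomx s c) <-> (forall j, c j * c (opp_idx j) = 1).
Proof.
move=> hs; rewrite /Defs.orthogonal trmx_monomx Bmx_monomx !mul_monomx.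
have e j : (s^-1)%g (opp_idx (s j)) = opp_idx j by rewrite -hs permK.
rewrite (@eq_monomx _ _ _ opp_idx _ (fun j => c (opp_idx j) * c j)) => [|j|j] /=;
  rewrite ?e ?mulr1 //.
split => [/monomx_coef_inj h j|h]; first by rewrite mulrC h.
by apply: eq_monomx => // j; rewrite mulrC h.
Qed.

Lemma coef_neq0 (c : 'I_n -> C) : (forall j, c j * c (opp_idx j) = 1) -> forall j, c j != 0.
Proof. by move=> h j; apply: contra_eq_neq (h j) => ->; rewrite mul0r eq_sym oner_neq0. Qed.

Lemma monomx_conj_cartan (s : {perm 'I_n}) c x y : (forall j, c j != 0) ->
  (forall j, weight y (s j) = weight x j) ->
  monomx s c *m cartan k x *m invmx (monomx s c) = cartan k y.
Proof.
move=> c_nz hw; have u := monomx_unitmx s c_nz.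
rewrite -[RHS](mulmxK u) !cartan_monomx !mul_monomx; congr (_ *m _).
by apply: eq_monomx => // j /=; rewrite hw mulrC.
Qed.

Lemma monomx_normalizer (s : {perm 'I_n}) c : opp_commute s ->
  (forall j, c j * c (opp_idx j) = 1) -> in_normalizer (monomx s c).
Proof.
move=> hs hc; have c_nz := coef_neq0 hc; split; first exact/orthogonal_monomxP.
split=> [x|y].
- exists (fun a => weight x ((s^-1)%g (ep k a))); apply: monomx_conj_cartan => // j /=.
  by rewrite -(weight_comp _ (opp_commute_inv hs)) permK.
- by exists (fun a => weight y (s (ep k a))); apply: monomx_conj_cartan => //; apply: weight_comp.
Qed.

Lemma orthogonal_unitmx (g : 'M[C]_n) : Defs.orthogonal g -> g \in unitmx.
Proof.
rewrite /Defs.orthogonal => hg.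
have BB : Bmx C N k *m Bmx C N k = 1%:M.
  by rewrite Bmx_monomx mul_monomx -monomx1; apply: eq_monomx => j /=; rewrite ?opp_idxK ?mulr1.
have : (Bmx C N k *m g^T *m Bmx C N k) *m g = 1%:M by rewrite -!mulmxA [g^T *m _]mulmxA hg BB.
by case/mulmx1_unit.
Qed.

Lemma weight_regular_inj : injective (weight (fun a : 'I_N => (a.+1)%:R)).
Proof.
have pos (a : 'I_N) : (0 : C) < (a.+1)%:R by rewrite ltr0Sn.
move=> i j; rewrite /weight.
case: (idxP i) => [[] a|i' hi]; case: (idxP j) => [[] a'|j' hj];
  rewrite ?idx_caseE ?idx_case0 // => /eqP; rewrite ?eqr_opp ?eqr_nat ?eqSS.
- by move=> /eqP/val_inj ->.
- by rewrite eq_sym -subr_eq0 opprK -natrD pnatr_eq0.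
- by rewrite oppr_eq0 pnatr_eq0.
- by rewrite -subr_eq0 opprK -natrD pnatr_eq0.
- by move=> /eqP/val_inj ->.
- by rewrite pnatr_eq0.
- by rewrite eq_sym oppr_eq0 pnatr_eq0.
- by rewrite eq_sym pnatr_eq0.
- by move=> _; apply: e0_unique.
Qed.

Lemma normalizer_monomx g : in_normalizer g ->
  exists (s : {perm 'I_n}) c,
    [/\ g = monomx s c, opp_commute s & forall j, c j * c (opp_idx j) = 1].
Proof.
case=> g_orth [conj_h _]; have ug := orthogonal_unitmx g_orth.
have [y hy] := conj_h (fun a => (a.+1)%:R).
have gh : g *m monomx id (weight (fun a => (a.+1)%:R)) = monomx id (weight y) *m g.
  by rewrite -!cartan_monomx -hy mulmxKV.
have [s [gE hw]] := intertwine_diag_monomx ug weight_regular_inj gh.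
have hs : opp_commute s.
  move=> j; apply: (@perm_inj _ (s^-1)%g); rewrite permK; apply: weight_regular_inj.
  by rewrite -[RHS]hw permKV !weight_opp hw.
exists s, (fun j => g (s j) j); split => //.
by apply/orthogonal_monomxP => //; rewrite -gE.
Qed.

End Normalizer.

Lemma zip_rot1_next (T : eqType) (s : seq T) :
  uniq s -> zip s (rot 1 s) = [seq (x, next s x) | x <- s].
Proof.
case: s => [//|y s] u; apply: (@eq_from_nth _ (y, y)).
  by rewrite size_zip size_rot size_map minnn.
rewrite size_zip size_rot minnn => i hi.
rewrite nth_zip ?size_rot // (nth_map y) // rot1_cons nth_rcons_default.
by rewrite next_nth mem_nth // index_uniq.
Qed.

Lemma fcycle_traject (T : eqType) (f : T -> T) x m :
  iter m f x = x -> fcycle f (traject f x m).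
Proof.
case: m => [//|m] hm; rewrite trajectS /= rcons_path fpath_traject /=.
by rewrite last_traject -iterS hm.
Qed.

Section Blocks.
Variables (C : fieldType) (N : nat) (k : bool).
Local Notation n := (dimV N k).
Local Notation idx := (@idx N k).
Local Notation monomx_on := (@monomx_on C n).

Definition cycle_support (a : seq 'I_N) : seq 'I_n :=
  [seq ep k x | x <- a] ++ [seq em k x | x <- a].

Lemma cycle_supportE a : cycle_support a = map (idx false) a ++ map (idx true) a.
Proof. by []. Qed.

Lemma mem_map_idx (a : seq 'I_N) b b' x : (idx b x \in map (idx b') a) = (b == b') && (x \in a).
Proof. by apply/mapP/andP => [[y ya /idx_inj [-> ->]]|[/eqP -> xa]] //; exists x. Qed.

Lemma mem_cycle_support a b x : (idx b x \in cycle_support a) = (x \in a).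
Proof.
by rewrite cycle_supportE mem_cat !mem_map_idx; case: b; rewrite ?orbF.
Qed.

Lemma e0_map_idx a b (j : 'I_n) : (N + N <= j)%N -> (j \in map (idx b) a) = false.
Proof. by move=> hj; apply/mapP => -[x _ e]; move: hj; rewrite e idx_e0. Qed.

Lemma uniq_cycle_support a : uniq a -> uniq (cycle_support a).
Proof.
move=> ua; rewrite cycle_supportE cat_uniq !(map_inj_uniq (@idx_injr _ _ _)) ua /=.
by rewrite andbT; apply/hasPn => _ /mapP [x _ ->]; rewrite mem_map_idx.
Qed.

Lemma summx_delta_diag (P : pred 'I_n) i j :
  (\sum_(l | P l) delta_mx l l) i j = (P j && (i == j))%:R :> C.
Proof.
rewrite summxE; case: (boolP (P j)) => Pj /=.
  rewrite (bigD1 j) //= big1 => [|l /andP[_ /negbTE nl]]; rewrite !mxE ?eqxx ?andbT ?addr0 //.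
  by rewrite (eq_sym j) nl andbF.
rewrite big1 // => l Pl; rewrite !mxE.
by case: (eqVneq j l) => [el|]; rewrite ?andbF //; move: Pj; rewrite el Pl.
Qed.

Lemma cyc_partE (s : seq 'I_n) (x : C) : uniq s ->
  cyc_part s x = \matrix_(i, j) (if (j \in s) && (i == next s j) then x else 0).
Proof.
move=> us; rewrite /cyc_part zip_rot1_next // big_map; apply/matrixP => i j.
rewrite summxE !mxE; case: (boolP (j \in s)) => js /=.
  rewrite (bigD1_seq j) //= big1_seq => [|l /andP[/negbTE nl _]]; rewrite !mxE ?eqxx ?andbT.
    by case: (i == _); rewrite ?mulr1 ?mulr0 ?addr0.
  by rewrite (eq_sym j) nl andbF mulr0.
rewrite big1_seq // => l /andP[_ ls]; rewrite !mxE.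
by case: (eqVneq j l) => [ej|]; rewrite ?andbF ?mulr0 //; move: js; rewrite ej ls.
Qed.

Lemma id_offE (s : seq 'I_n) i j : id_off C s i j = ((j \notin s) && (i == j))%:R.
Proof. exact: summx_delta_diag. Qed.

Lemma eps_op_monomx (eps : C) :
  eps_op N k eps = monomx id (fun j => if (N + N <= j)%N then eps else 1).
Proof.
apply/matrixP => i j; rewrite /eps_op -scaler_sumr !mxE !summx_delta_diag.
by rewrite ltnNge; case: (N + N <= j)%N; case: (i == j); rewrite /= ?mulr1 ?mulr0 ?addr0 ?add0r.
Qed.

Definition in_support (a : seq 'I_N) : pred 'I_n := fun j => j \in cycle_support a.

Lemma minus_op_monomx (a : seq 'I_N) s c : uniq a ->
  fcycle s (cycle_support a) -> (forall j, j \in cycle_support a -> c j = 1) ->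
  @minus_op C N k a = monomx_on (in_support a) s c.
Proof.
move=> ua cyc c1; apply/matrixP => i j.
rewrite /minus_op -/(cycle_support a) !mxE (cyc_partE _ (uniq_cycle_support ua)) !mxE id_offE.
rewrite /in_support; case: (boolP (j \in _)) => /= ja; last by rewrite add0r; case: (i == j).
by rewrite (nextE cyc ja) c1 // addr0.
Qed.

Lemma plus_op_monomx (z lam : C) (a : seq 'I_N) (p : 'I_N -> 'I_N) s c :
  uniq a -> fcycle p a ->
  (forall b x, x \in a -> s (idx b x) = idx b (p x)) ->
  (forall x, x \in a -> c (idx false x) = z^-1 * lam^-1 /\ c (idx true x) = z * lam) ->
  plus_op k z a lam = monomx_on (in_support a) s c.
Proof.
move=> ua cyc hs hc; apply/matrixP => i j.
have next_idx b x : x \in a -> next (map (idx b) a) (idx b x) = idx b (p x).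
  by move=> xa; rewrite next_map ?(nextE cyc xa) //; exact: idx_injr.
have u b : uniq (map (idx b) a) by rewrite (map_inj_uniq (@idx_injr _ _ _)).
rewrite [plus_op _ _ _ _]/(cyc_part (map (idx true) a) _ + cyc_part (map (idx false) a) _ + _).
rewrite !mxE !cyc_partE // !mxE id_offE /in_support.
case: (idxP j) => [b x|j' hj]; last first.
  by rewrite cycle_supportE mem_cat !e0_map_idx // !add0r; case: (i == j').
rewrite !mem_map_idx mem_cycle_support; case: (boolP (x \in a)) => xa /=; last first.
  by rewrite !andbF !add0r; case: (i == _).
have [c_ep c_em] := hc x xa.
by case: b; rewrite !next_idx // hs // ?c_ep ?c_em /=; case: (i == _); rewrite ?addr0 ?add0r.
Qed.

End Blocks.

Section PermCycles.
Variables (T : finType) (f : {perm T}).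
Local Notation rt := (froot f).
Local Notation ix x := (findex f (froot f x) x).

Let f_inj : injective f := @perm_inj _ f.
Let fsym : connect_sym (rel_of_simpl (frel f)) := fconnect_sym f_inj.

Lemma fconnect_froot x : fconnect f (rt x) x.
Proof. by rewrite fsym; apply: connect_root. Qed.

Lemma froot_f x : rt (f x) = rt x.
Proof. exact/esym/(fingraph.rootP fsym)/fconnect1. Qed.

Lemma froot_root x : rt (rt x) = rt x.
Proof. exact: (fingraph.root_root fsym x). Qed.

Lemma iter_findex_froot x : iter (ix x) f (rt x) = x.
Proof. exact/iter_findex/fconnect_froot. Qed.

Lemma findex_froot_lt x : (ix x < fingraph.order f (rt x))%N.
Proof. exact/findex_max/fconnect_froot. Qed.

Lemma findex_froot_f x : ((ix x).+1 < fingraph.order f (rt x))%N -> ix (f x) = (ix x).+1.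
Proof.
move=> lt; rewrite froot_f.
have -> : f x = iter (ix x).+1 f (rt x) by rewrite iterS iter_findex_froot.
exact: findex_iter.
Qed.

Lemma findex_froot_last x : (ix x).+1 = fingraph.order f (rt x) -> f x = rt x.
Proof.
move=> e; have -> : f x = iter (ix x).+1 f (rt x) by rewrite iterS iter_findex_froot.
by rewrite e iter_order.
Qed.

Lemma mem_orbit_froot r x : rt r = r -> (x \in fingraph.orbit f r) = (rt x == r).
Proof. by move=> rr; rewrite -fconnect_orbit -(fingraph.root_connect fsym) rr eq_sym. Qed.

Lemma findex_iter_froot r i : rt r = r -> (i < fingraph.order f r)%N ->
  rt (iter i f r) = r /\ ix (iter i f r) = i.
Proof.
move=> rr lt; have rti : rt (iter i f r) = r.
  by apply/eqP; rewrite -mem_orbit_froot // -fconnect_orbit fconnect_iter.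
by rewrite rti findex_iter.
Qed.

Lemma perm_eq_flatten_orbits (L : seq T) :
  perm_eq L [seq r <- enum T | rt r == r] ->
  perm_eq (flatten [seq fingraph.orbit f r | r <- L]) (enum T).
Proof.
move=> pL; have uL : uniq L by rewrite (perm_uniq pL) filter_uniq ?enum_uniq.
apply/allP => x _ /=; apply/eqP.
rewrite [RHS]count_uniq_mem ?enum_uniq // mem_enum count_flatten -map_comp.
have -> : [seq (count_mem x \o fingraph.orbit f) r | r <- L] =
          [seq nat_of_bool (rt x == r) | r <- L].
  apply/eq_in_map => r rL /=; have : r \in [seq r <- enum T | rt r == r] by rewrite -(perm_mem pL).
  by rewrite mem_filter => /andP[/eqP rr _]; rewrite count_uniq_mem ?orbit_uniq // mem_orbit_froot.
rewrite (sumn_count (fun r => rt x == r)) (eq_count (a2 := pred1 (rt x))) => [|r];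
  last exact: eq_sym.
by rewrite count_uniq_mem // (perm_mem pL) mem_filter froot_root eqxx mem_enum.
Qed.

End PermCycles.

Section NormalForm.
Variables (C : numClosedFieldType) (N : nat) (k : bool).
Local Notation n := (dimV N k).
Local Notation idx := (@idx N k).
Local Notation opp_idx := (@opp_idx N k).
Local Notation monomx := (@monomx C n).
Local Notation cycle_support := (@cycle_support N k).
Local Notation in_support := (@in_support N k).
Variables (p : {perm 'I_N}) (sg : 'I_N -> bool) (c : 'I_n -> C).
Hypothesis hc : forall j, c j * c (opp_idx j) = 1.
Local Notation sigma := (sgperm k p sg).
Local Notation rt := (froot p).
Local Notation ix a := (findex p (froot p a) a).
Local Notation len r := (fingraph.order p r).

Definition walk_sign (r : 'I_N) (i : nat) : bool := \big[addb/false]_(m < i) sg (iter m p r).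

Lemma iter_sgperm_ep r i : iter i sigma (idx false r) = idx (walk_sign r i) (iter i p r).
Proof.
elim: i => [|i IH]; first by rewrite /walk_sign big_ord0.
by rewrite !iterS IH sgpermE /walk_sign big_ord_recr.
Qed.

Definition neg_cycle (r : 'I_N) : bool := walk_sign r (len r).
Definition cycle_end (a : 'I_N) : bool := (ix a).+1 == len (rt a).
Definition normal_sign (a : 'I_N) : bool := cycle_end a && neg_cycle (rt a).
Definition cycle_sign (a : 'I_N) : bool := walk_sign (rt a) (ix a).

Local Notation nu := (sgperm k 1%g cycle_sign).
Local Notation sigma0 := (sgperm k p normal_sign).

Lemma cycle_sign_next a : cycle_sign (p a) = cycle_sign a (+) sg a (+) normal_sign a.
Proof.
rewrite /cycle_sign /normal_sign /cycle_end; case: eqP => [last|ne] /=.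
  rewrite froot_f (findex_froot_last last) findex0 /neg_cycle -last /walk_sign big_ord0.
  by rewrite big_ord_recr /= iter_findex_froot addbb.
have lt : ((ix a).+1 < len (rt a))%N by rewrite ltn_neqAle (findex_froot_lt p a) andbT; apply/eqP.
by rewrite findex_froot_f // froot_f /walk_sign big_ord_recr /= iter_findex_froot addbF.
Qed.

Lemma sigma_nu j : sigma (nu j) = nu (sigma0 j).
Proof.
case: (idxP j) => [b a|j' hj]; last by rewrite !sgperm0.
rewrite !sgpermE !permE /= cycle_sign_next; congr idx.
by case: b (normal_sign a) (cycle_sign a) (sg a) => [] [] [] [].
Qed.

Definition walk_coef (r : 'I_N) (i : nat) : C :=
  \prod_(m < i) c (iter m sigma (idx false r)).
Definition cycle_coef (r : 'I_N) : C := walk_coef r (len r).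

(* In the normal form a positive cycle carries the constant coefficient
   [cycle_scalar r], an l-th root of the product of its coefficients, and a
   negative one carries 1; then the product is absorbed by rescaling e_r and
   e_(-r) by a square root [root_scale r] of it. *)
Definition cycle_scalar (r : 'I_N) : C :=
  if neg_cycle r then 1 else (len r).-root (cycle_coef r).
Definition root_scale (r : 'I_N) : C :=
  if neg_cycle r then 2.-root (cycle_coef r) else 1.
(* The ratio between the product of the coefficients met on the walk from e_r
   to +-e_a and the one met by the normal form, r being the root of a's cycle. *)
Definition rescale (a : 'I_N) : C :=
  walk_coef (rt a) (ix a) / (root_scale (rt a) * cycle_scalar (rt a) ^+ ix a).

Definition rescaling : 'I_n -> C :=
  idx_case (fun b a => if b then (rescale a)^-1 else rescale a) (fun=> 1).
Definition normal_coef : 'I_n -> C :=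
  idx_case (fun b a => if b then (cycle_scalar (rt a))^-1 else cycle_scalar (rt a)) c.

Lemma c_neq0 j : c j != 0. Proof. exact: coef_neq0 hc j. Qed.

Lemma c_opp j : c (opp_idx j) = (c j)^-1.
Proof. by apply: (mulfI (c_neq0 j)); rewrite hc mulfV ?c_neq0. Qed.

Lemma walk_coef_neq0 r i : walk_coef r i != 0.
Proof. by apply/prodf_neq0 => m _; apply: c_neq0. Qed.

Lemma walk_coefS r i :
  walk_coef r i.+1 = walk_coef r i * c (iter i sigma (idx false r)).
Proof. by rewrite /walk_coef big_ord_recr. Qed.

Lemma cycle_scalar_neq0 r : cycle_scalar r != 0.
Proof.
rewrite /cycle_scalar; case: ifP => _; first exact: oner_neq0.
by rewrite rootC_eq0 ?fingraph.order_gt0 ?walk_coef_neq0.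
Qed.

Lemma root_scale_neq0 r : root_scale r != 0.
Proof. by rewrite /root_scale; case: ifP => _; rewrite ?oner_neq0 ?rootC_eq0 ?walk_coef_neq0. Qed.

Lemma rescale_neq0 a : rescale a != 0.
Proof.
have := root_scale_neq0 (rt a); have := cycle_scalar_neq0 (rt a).
by rewrite /rescale => bz dz; rewrite mulf_neq0 ?invr_eq0 ?mulf_neq0 ?expf_neq0 ?walk_coef_neq0.
Qed.

Lemma rescale_root a : rescale (rt a) = (root_scale (rt a))^-1.
Proof. by rewrite /rescale froot_root findex0 /walk_coef big_ord0 expr0 mulr1 mul1r. Qed.

Lemma rescaling_neq0 j : rescaling j != 0.
Proof.
rewrite /rescaling; case: (idxP j) => [[] a|j' hj]; rewrite ?idx_caseE ?idx_case0 ?oner_neq0 //.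
  by rewrite invr_eq0 rescale_neq0.
exact: rescale_neq0.
Qed.

Lemma rescaling_opp j : rescaling (opp_idx j) = (rescaling j)^-1.
Proof.
rewrite /rescaling; case: (idxP j) => [b a|j' hj]; last by rewrite opp_idx0 // idx_case0 // invr1.
by rewrite opp_idxE !idx_caseE; case: b; rewrite ?invrK.
Qed.

Lemma normal_coef_opp j : normal_coef (opp_idx j) = (normal_coef j)^-1.
Proof.
rewrite /normal_coef; case: (idxP j) => [b a|j' hj].
  by rewrite opp_idxE !idx_caseE; case: b; rewrite ?invrK.
by rewrite opp_idx0 // idx_case0 // -c_opp opp_idx0.
Qed.

Lemma nu_ep a : nu (idx false a) = iter (ix a) sigma (idx false (rt a)).
Proof. by rewrite sgpermE perm1 iter_sgperm_ep iter_findex_froot. Qed.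

Lemma normal_coef_rescaling_ep a :
  normal_coef (idx false a) * rescaling (sigma0 (idx false a)) =
  c (nu (idx false a)) * rescaling (idx false a).
Proof.
rewrite nu_ep sgpermE /normal_coef /rescaling !idx_caseE /=.
have wS := walk_coefS (rt a) (ix a); set w := c (iter _ _ _) in wS *.
have := rescale_neq0 a; have := walk_coef_neq0 (rt a) (ix a).
have := cycle_scalar_neq0 (rt a); have := root_scale_neq0 (rt a).
case ce: (cycle_end a); last first.
  have lt : ((ix a).+1 < len (rt a))%N.
    by rewrite ltn_neqAle (findex_froot_lt p a) andbT; apply: negbT.
  rewrite /normal_sign ce /= /rescale findex_froot_f // froot_f wS exprS.
  by move=> dz bz _ _; field; rewrite ?expf_neq0 ?dz ?bz.
have last := eqP ce; rewrite /normal_sign ce (findex_froot_last last) rescale_root /=.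
have ca : cycle_coef (rt a) = walk_coef (rt a) (ix a) * w by rewrite /cycle_coef -last.
rewrite /rescale /root_scale /cycle_scalar; case: ifP => neg /=.
  set d := 2.-root _; have d2 : d ^+ 2 = walk_coef (rt a) (ix a) * w by rewrite rootCK.
  move=> dz _ _ _; rewrite expr1n mulr1 invrK mul1r mulrA [w * _]mulrC -d2.
  by rewrite expr2 mulfK.
set b := _.-root _; have bl : b * b ^+ ix a = walk_coef (rt a) (ix a) * w.
  by rewrite -exprS last rootCK ?fingraph.order_gt0.
move=> _ bz _ _; rewrite divr1 mul1r mulrA [w * _]mulrC -bl.
by rewrite mulfK // expf_neq0.
Qed.

Lemma normal_coef_rescaling j : normal_coef j * rescaling (sigma0 j) = c (nu j) * rescaling j.
Proof.
case: (idxP j) => [[] a|j' hj]; last by rewrite !sgperm0 // /normal_coef /rescaling !idx_case0.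
  rewrite -[idx true a]/(idx (~~ false) a) -opp_idxE !sgperm_opp.
  by rewrite normal_coef_opp c_opp !rescaling_opp -!invfM normal_coef_rescaling_ep.
exact: normal_coef_rescaling_ep.
Qed.

Lemma sgperm_conj_normal : exists h : 'M[C]_n,
  in_normalizer h /\ h *m monomx sigma c *m invmx h = monomx sigma0 normal_coef.
Proof.
have uM := monomx_unitmx nu rescaling_neq0.
have hM : monomx sigma c *m monomx nu rescaling =
          monomx nu rescaling *m monomx sigma0 normal_coef.
  rewrite !mul_monomx; apply: eq_monomx => j /=; first exact: sigma_nu.
  by rewrite [RHS]mulrC normal_coef_rescaling.
exists (invmx (monomx nu rescaling)); split; last by rewrite invmxK -mulmxA hM mulKmx.
rewrite monomx_invmx; last exact: rescaling_neq0.
apply: monomx_normalizer => [|j]; first exact/opp_commute_inv/sgperm_opp.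
rewrite (opp_commute_inv (@sgperm_opp _ k 1%g cycle_sign)) rescaling_opp invrK.
by rewrite mulVf ?rescaling_neq0.
Qed.

Lemma sigma0_pos_cycle r b x :
  rt r = r -> ~~ neg_cycle r -> x \in fingraph.orbit p r -> sigma0 (idx b x) = idx b (p x).
Proof.
move=> rr pos; rewrite mem_orbit_froot // sgpermE /normal_sign => /eqP ->.
by rewrite (negbTE pos) andbF addbF.
Qed.

Lemma iter_sigma0_neg r b i : rt r = r -> neg_cycle r -> (i < len r)%N ->
  iter i sigma0 (idx b r) = idx b (iter i p r).
Proof.
move=> rr neg; elim: i => [//|i IH] lt; rewrite !iterS IH ?(ltnW lt) // sgpermE.
have [rti ixi] := findex_iter_froot rr (ltnW lt).
by rewrite /normal_sign /cycle_end ixi rti (ltn_eqF lt) /= addbF.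
Qed.

Lemma iter_sigma0_len r b : rt r = r -> neg_cycle r ->
  iter (len r) sigma0 (idx b r) = idx (~~ b) r.
Proof.
move=> rr neg; have l_gt0 := fingraph.order_gt0 p r.
have lt : ((len r).-1 < len r)%N by rewrite ltn_predL.
rewrite -(prednK l_gt0) iterS iter_sigma0_neg // sgpermE.
have [rti ixi] := findex_iter_froot rr lt.
rewrite /normal_sign /cycle_end ixi rti prednK // eqxx neg addbT -iterS prednK //.
by rewrite (iter_order (@perm_inj _ p)).
Qed.

Lemma traject_sigma0_neg r b : rt r = r -> neg_cycle r ->
  traject sigma0 (idx b r) (len r) = map (idx b) (fingraph.orbit p r).
Proof.
move=> rr neg; apply: (@eq_from_nth _ (idx b r)); rewrite size_traject ?size_map ?size_orbit //.
move=> i lt; rewrite nth_traject // (nth_map r) ?size_orbit // nth_traject //.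
exact: iter_sigma0_neg.
Qed.

Lemma fcycle_sigma0_neg r : rt r = r -> neg_cycle r ->
  fcycle sigma0 (cycle_support (fingraph.orbit p r)).
Proof.
move=> rr neg; rewrite cycle_supportE -!traject_sigma0_neg //.
rewrite -[idx true r](iter_sigma0_len false rr neg) -trajectD.
by apply: fcycle_traject; rewrite iterD !iter_sigma0_len.
Qed.

Variable z : nat -> C.
Hypothesis z_neq0 : forall l, z l != 0.

Definition cycle_lambda (r : 'I_N) : C := (z (len r) * cycle_scalar r)^-1.

Definition cycle_block (r : 'I_N) : 'M[C]_n :=
  if neg_cycle r then @minus_op C N k (fingraph.orbit p r)
  else plus_op k (z (len r)) (fingraph.orbit p r) (cycle_lambda r).

Lemma cycle_block_monomx r : rt r = r ->
  cycle_block r = monomx_on (in_support (fingraph.orbit p r)) sigma0 normal_coef.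
Proof.
move=> rr; have coefE b x : x \in fingraph.orbit p r ->
    normal_coef (idx b x) = if b then (cycle_scalar r)^-1 else cycle_scalar r.
  by rewrite mem_orbit_froot // /normal_coef idx_caseE => /eqP ->.
rewrite /cycle_block; case: ifP => neg.
  apply: minus_op_monomx; [exact: orbit_uniq | exact: fcycle_sigma0_neg |].
  move=> j; case: (idxP j) => [b x|j' hj]; last by rewrite cycle_supportE mem_cat !e0_map_idx.
  by rewrite mem_cycle_support => /coefE ->; rewrite /cycle_scalar neg invr1 if_same.
apply: (plus_op_monomx (orbit_uniq _ _) (cycle_orbit (@perm_inj _ p) r)).
  by move=> b x; apply: sigma0_pos_cycle; rewrite ?neg.
move=> x xr; rewrite !coefE // /cycle_lambda invrK.
have zz := z_neq0 (len r); split; first by rewrite mulKf.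
by rewrite invfM mulrA mulfV // mul1r.
Qed.

Definition cycle_roots : seq 'I_N := [seq r <- enum 'I_N | rt r == r].
Definition block_roots : seq 'I_N :=
  [seq r <- cycle_roots | ~~ neg_cycle r] ++ [seq r <- cycle_roots | neg_cycle r].

Lemma perm_block_roots : perm_eq block_roots cycle_roots.
Proof. by rewrite perm_catC perm_filterC. Qed.

Lemma block_roots_root r : r \in block_roots -> rt r = r.
Proof. by rewrite (perm_mem perm_block_roots) mem_filter => /andP[/eqP]. Qed.

Lemma big_cycle_block :
  \prod_(r <- block_roots) cycle_block r =
  monomx_on (fun j => (j < N + N)%N) sigma0 normal_coef.
Proof.
rewrite (eq_big_seq _ (fun r rL => cycle_block_monomx (block_roots_root rL))).
have in_suppE r b x : rt r = r -> in_support (fingraph.orbit p r) (idx b x) = (rt x == r).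
  by move=> rr; rewrite /in_support mem_cycle_support mem_orbit_froot.
have in_supp0 r (j : 'I_n) : (N + N <= j)%N -> in_support (fingraph.orbit p r) j = false.
  by move=> hj; rewrite /in_support cycle_supportE mem_cat !e0_map_idx.
have hasE j : has (fun r => in_support (fingraph.orbit p r) j) block_roots = (j < N + N)%N.
  case: (idxP j) => [b x|j' hj]; last by rewrite ltnNge hj; apply/hasPn => r _; rewrite in_supp0.
  rewrite ltnNge idx_e0; apply/hasP; exists (rt x); last by rewrite in_suppE ?froot_root.
  by rewrite (perm_mem perm_block_roots) mem_filter froot_root eqxx mem_enum.
rewrite big_monomx_on; first by apply: eq_monomx => j; rewrite hasE.
- move=> r j /block_roots_root rr; case: (idxP j) => [b x|j' hj]; last by rewrite in_supp0.
  by rewrite sgpermE !in_suppE // froot_f.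
apply: (@sub_in_pairwise _ (fun r => rt r == r) [rel r1 r2 | r1 != r2]).
- move=> r1 r2 /eqP rr1 /eqP rr2 /= ne; apply/pred0P => j /=.
  case: (idxP j) => [b x|j' hj]; rewrite /in_mem /= /in_support; last first.
    by rewrite cycle_supportE mem_cat !e0_map_idx.
  rewrite !mem_cycle_support !mem_orbit_froot //.
  by apply/andP => -[/eqP e1 /eqP e2]; move: ne; rewrite -e1 -e2 eqxx.
- by apply/allP => r /block_roots_root ->.
- by rewrite -uniq_pairwise (perm_uniq perm_block_roots) filter_uniq ?enum_uniq.
Qed.

Definition plus_data : seq (seq 'I_N * C) :=
  [seq (fingraph.orbit p r, cycle_lambda r) | r <- cycle_roots & ~~ neg_cycle r].
Definition minus_data : seq (seq 'I_N) :=
  [seq fingraph.orbit p r | r <- cycle_roots & neg_cycle r].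

Lemma blocks_normal_form :
  (\prod_(q <- plus_data) plus_op k (z (size q.1)) q.1 q.2) *
  (\prod_(a <- minus_data) @minus_op C N k a) = \prod_(r <- block_roots) cycle_block r.
Proof.
rewrite big_cat !big_map; congr (_ * _); apply: eq_big_seq => r;
  by rewrite mem_filter /cycle_block => /andP[neg _]; rewrite ?size_orbit ?neg ?(negbTE neg).
Qed.

Lemma data_admissible :
  [/\ all (fun q => 0 < size q.1)%N plus_data, all (fun a => 0 < size a)%N minus_data,
      all (fun q => q.2 != 0) plus_data &
      perm_eq (flatten ([seq q.1 | q <- plus_data] ++ minus_data)) (enum 'I_N)].
Proof.
split; try by apply/allP => q /mapP [r _ ->]; rewrite ?size_orbit ?fingraph.order_gt0.
- by apply/allP => q /mapP [r _ ->]; rewrite invr_eq0 mulf_neq0 ?cycle_scalar_neq0.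
- by rewrite -map_comp -map_cat; apply: perm_eq_flatten_orbits; exact: perm_block_roots.
Qed.

Lemma monomx_sigma0_split :
  monomx sigma0 normal_coef =
  monomx id (fun j => if (N + N <= j)%N then c j else 1) *m
  monomx_on (fun j => (j < N + N)%N) sigma0 normal_coef.
Proof.
rewrite mul_monomx; apply: eq_monomx => j /=; rewrite ltnNge;
  case: (idxP j) => [b x|j' hj].
- by rewrite idx_e0.
- by rewrite hj sgperm0.
- by rewrite idx_e0 /= sgpermE idx_e0 mul1r.
- by rewrite hj /= hj /normal_coef idx_case0 // mulr1.
Qed.

Lemma sgperm_normal_form :
  exists (ps : seq (seq 'I_N * C)) (ms : seq (seq 'I_N)) (h : 'M[C]_n),
  [/\ all (fun q => 0 < size q.1)%N ps, all (fun a => 0 < size a)%N ms,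
      all (fun q => q.2 != 0) ps &
      perm_eq (flatten ([seq q.1 | q <- ps] ++ ms)) (enum 'I_N)] /\
  in_normalizer h /\
  h *m monomx sigma c *m invmx h =
  monomx id (fun j => if (N + N <= j)%N then c j else 1) *m
  ((\prod_(q <- ps) plus_op k (z (size q.1)) q.1 q.2) * (\prod_(a <- ms) @minus_op C N k a)).
Proof.
have [h [hN hE]] := sgperm_conj_normal.
exists plus_data, minus_data, h; split; first exact: data_admissible.
by rewrite hE blocks_normal_form big_cycle_block monomx_sigma0_split.
Qed.

End NormalForm.

Lemma zeta_neq0 (R : realType) (l : nat) : zeta R l != 0.
Proof.
apply/eqP; rewrite /zeta; set t := (pi * _ / _) => z0.
have ct : cos t = 0 by move: (congr1 (@complex.Re R) z0).
have st : sin t = 0 by move: (congr1 (@complex.Im R) z0).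
by have := cos2Dsin2 t; rewrite ct st expr0n addr0 => /eqP; rewrite eq_sym oner_eq0.
Qed.

Lemma normalizer_normal_form (C : numClosedFieldType) (z : nat -> C) (N : nat) (k : bool)
    (g : 'M[C]_(dimV N k)) :
  (forall l, z l != 0) -> in_normalizer g ->
  exists (c : 'I_(dimV N k) -> C) (ps : seq (seq 'I_N * C)) (ms : seq (seq 'I_N))
         (h : 'M[C]_(dimV N k)),
  [/\ forall j, c j * c (opp_idx j) = 1,
      [/\ all (fun q => 0 < size q.1)%N ps, all (fun a => 0 < size a)%N ms,
          all (fun q => q.2 != 0) ps &
          perm_eq (flatten ([seq q.1 | q <- ps] ++ ms)) (enum 'I_N)],
      in_normalizer h &
      h *m g *m invmx h =
      monomx id (fun j => if (N + N <= j)%N then c j else 1) *m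
      ((\prod_(q <- ps) plus_op k (z (size q.1)) q.1 q.2) * (\prod_(a <- ms) @minus_op C N k a))].
Proof.
move=> z_neq0 /normalizer_monomx [s [c [-> /opp_commute_sgperm [p [f ->]] hc]]].
have [ps [ms [h [adm [hN hE]]]]] := @sgperm_normal_form C N k p f c hc z z_neq0.
by exists c, ps, ms, h.
Qed.

Theorem mainTheorem1 (R : realType) :
  (forall (N : nat) (g : 'M[R[i]]_(dimV N false)),
     @in_normalizer _ N _ g ->
     exists (ps : seq (seq 'I_N * R[i])) (ms : seq (seq 'I_N))
            (h : 'M[R[i]]_(dimV N false)),
       admissible ps ms /\ @in_normalizer _ N _ h /\
       h *m g *m invmx h = normal_form false ps ms) /\
  (forall (N : nat) (g : 'M[R[i]]_(dimV N true)),
     @in_normalizer _ N _ g ->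
     exists (eps : R[i]) (ps : seq (seq 'I_N * R[i])) (ms : seq (seq 'I_N))
            (h : 'M[R[i]]_(dimV N true)),
       (eps = 1 \/ eps = -1) /\ admissible ps ms /\ @in_normalizer _ N _ h /\
       h *m g *m invmx h = @eps_op _ N true eps * normal_form true ps ms).
Proof.
split=> N g /(normalizer_normal_form (@zeta_neq0 R)) [c [ps [ms [h [hc [a1 a2 a3 a4] hN hE]]]]].
- exists ps, ms, h; do 2!split => //; rewrite hE /normal_form.
  rewrite (_ : monomx _ _ = 1%:M) ?mul1mx // -monomx1; apply: eq_monomx => // j.
  by rewrite leqNgt (leq_trans (ltn_ord j)) // /dimV addn0.
- have e0_lt : (N + N < dimV N true)%N by rewrite /dimV addn1.
  pose e0 := Ordinal e0_lt.
  exists (c e0), ps, ms, h; split.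
    have := hc e0; rewrite opp_idx0 // -expr2 => /eqP; rewrite sqrf_eq1.
    by case/orP => /eqP ->; [left|right].
  do 2!split => //; rewrite hE eps_op_monomx /normal_form; congr (_ *m _).
  by apply: eq_monomx => // j; case: ifP => // hj; congr c; apply: e0_unique.
Qed.
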